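(* Let $r\in\mathcal R$ be a proper distance matrix. Then $r$ is universal if and only if for each $n\in\mathbb N$ the orbit of $r$ under the group $S^n_\infty$ is everywhere dense (in the weak topology) in $\mathcal R^n(p_n(r))$. Moreover, $r$ is weakly universal if and only if its orbit under $S_\infty$ is everywhere dense in $\mathcal R$.
   Context: $\mathcal R$ is the set of infinite real matrices $r=\{r_{i,j}\}_{i,j\ge1}$ with $r_{i,i}=0$, $r_{i,j}\ge0$, $r_{i,j}=r_{j,i}$, $r_{i,k}+r_{k,j}\ge r_{i,j}$, with the weak (entrywise) topology; $\mathcal R_n$ is the analogous set of $n\times n$ matrices; $p_n(r)$ is the upper-left $n\times n$ corner; $r$ is proper if $r_{i,j}>0$ for $i\ne j$. For $q\in\mathcal R_n$, $A(q)=\{a\in\mathbb R^n:|a_i-a_j|\le q_{i,j}\le a_i+a_j\ \forall i,j\}$ and $\mathcal R^n(q)=\{r\in\mathcal R: p_n(r)=q\}$. $S_\infty$ is the group of finite permutations $g$ of $\mathbb N$, acting on $\mathcal R$ by $(gr)_{i,j}=r_{g(i),g(j)}$; $S^n_\infty$ is its subgroup of permutations fixing $1,\dots,n$, which maps each $\mathcal R^n(q)$ into itself. A proper $r$ is universal if for every $n$, $a\in A(p_n(r))$, $\epsilon>0$ there is $m$ with $\max_{i\le n}|r_{i,m}-a_i|<\epsilon$; a proper $r$ is weakly universal if for every $n$ the set of submatrices $\{r_{i_k,i_s}\}_{k,s=1}^n$ over all $n$-tuples of indices is dense in $\mathcal R_n$. *)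

(* Indices are 0-based: entry (i,j) here is
   entry (i+1,j+1) of the paper. An infinite matrix is a function nat -> nat -> R;
   an n x n matrix is a function nat -> nat -> R of which only entries with
   indices < n are relevant. *)
From Stdlib Require Import Reals.
Open Scope R_scope.

Definition mat := nat -> nat -> R.

Definition is_dist (r : mat) : Prop :=
  (forall i, r i i = 0) /\
  (forall i j, 0 <= r i j) /\
  (forall i j, r i j = r j i) /\
  (forall i j k, r i j <= r i k + r k j).

Definition is_dist_n (n : nat) (q : mat) : Prop :=
  (forall i, (i < n)%nat -> q i i = 0) /\
  (forall i j, (i < n)%nat -> (j < n)%nat -> 0 <= q i j) /\
  (forall i j, (i < n)%nat -> (j < n)%nat -> q i j = q j i) /\
  (forall i j k, (i < n)%nat -> (j < n)%nat -> (k < n)%nat ->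
     q i j <= q i k + q k j).

Definition proper (r : mat) : Prop := forall i j, i <> j -> 0 < r i j.

Definition A_set (n : nat) (q : mat) (a : nat -> R) : Prop :=
  forall i j, (i < n)%nat -> (j < n)%nat ->
    Rabs (a i - a j) <= q i j /\ q i j <= a i + a j.

(* \mathcal R^n(q) = { r \in R : p_n(r) = q } *)
Definition R_n_fiber (n : nat) (q : mat) (r : mat) : Prop :=
  is_dist r /\ forall i j, (i < n)%nat -> (j < n)%nat -> r i j = q i j.

Definition finperm (g : nat -> nat) : Prop :=
  (exists h : nat -> nat, (forall i, h (g i) = i) /\ (forall i, g (h i) = i)) /\
  (exists N, forall i, (N <= i)%nat -> g i = i).

Definition act (g : nat -> nat) (r : mat) : mat := fun i j => r (g i) (g j).

Definition orbit_n (n : nat) (r : mat) (r' : mat) : Prop :=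
  exists g, finperm g /\ (forall i, (i < n)%nat -> g i = i) /\ r' = act g r.

Definition orbit (r : mat) (r' : mat) : Prop :=
  exists g, finperm g /\ r' = act g r.

(* D is everywhere dense in X for the weak (entrywise / product) topology on
   infinite matrices: every basic neighbourhood of a point of X (finitely many
   entries, all within the N x N corner, prescribed up to eps) meets D. *)
Definition weakly_dense_in (D X : mat -> Prop) : Prop :=
  forall x, X x -> forall (N : nat) (eps : R), 0 < eps ->
    exists d, D d /\ forall i j, (i < N)%nat -> (j < N)%nat -> Rabs (d i j - x i j) < eps.

Definition universal (r : mat) : Prop :=
  proper r /\
  forall (n : nat) (a : nat -> R), A_set n r a ->
    forall eps, 0 < eps ->
      exists m : nat, forall i, (i < n)%nat -> Rabs (r i m - a i) < eps.

(* weakly universal: for each n the set of n x n submatrices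
   {r_{i_k, i_s}}_{k,s<n} over all n-tuples of indices is dense in R_n
   (R_n carries its Euclidean topology; sup-norm neighbourhoods). *)
Definition weakly_universal (r : mat) : Prop :=
  proper r /\
  forall (n : nat) (q : mat), is_dist_n n q ->
    forall eps, 0 < eps ->
      exists idx : nat -> nat, forall k s, (k < n)%nat -> (s < n)%nat ->
        Rabs (r (idx k) (idx s) - q k s) < eps.

(* Universality is an approximate one-point extension property of r.  If the
   S^n_oo-orbits are dense in the fibres, apply this to the extension of p_n(r) by a
   single point at distances a (all indices >= n glued to that point): the image of
   index n under a nearly-fitting permutation is the required m.  Conversely, given x
   in the fibre of p_n(r), realise its first K points inside r one at a time: the new
   point k is asked to lie at distance a(y) = min_j (x_jk + c + r(f j, y)) from every
   y, a function in A(p_M(r)); the margin c > 0 keeps it away from the points already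
   chosen, so the index map is injective and extends to a finite permutation.  The
   weak statement is the same argument without fixed indices, with the off-diagonal
   shift by c again forcing distinct indices. *)

From Stdlib Require Import Reals Lra Lia.
Open Scope R_scope.

Definition swap (a b i : nat) : nat :=
  if Nat.eqb i a then b else if Nat.eqb i b then a else i.

Lemma swap_involutive a b i : swap a b (swap a b i) = i.
Proof.
  unfold swap.
  destruct (Nat.eqb_spec i a); destruct (Nat.eqb_spec i b);
  repeat match goal with |- context [Nat.eqb ?x ?y] => destruct (Nat.eqb_spec x y) end;
  lia.
Qed.

Lemma finperm_id : finperm (fun i => i).
Proof. split; [exists (fun i => i) | exists 0%nat]; auto. Qed.

Lemma finperm_comp_swap g a b : finperm g -> finperm (fun i => g (swap a b i)).
Proof.
  intros [[h [Hhg Hgh]] [N HN]]. split.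
  - exists (fun i => swap a b (h i)). split; intros i.
    + rewrite Hhg. apply swap_involutive.
    + rewrite swap_involutive. apply Hgh.
  - exists (S (Nat.max N (Nat.max a b))). intros i Hi. unfold swap.
    destruct (Nat.eqb_spec i a); [lia|].
    destruct (Nat.eqb_spec i b); [lia|].
    apply HN; lia.
Qed.

Definition injective_below (k : nat) (f : nat -> nat) : Prop :=
  forall i j, (i < k)%nat -> (j < k)%nat -> f i = f j -> i = j.

Lemma finperm_extend k f :
  injective_below k f -> exists g, finperm g /\ forall i, (i < k)%nat -> g i = f i.
Proof.
  induction k as [|k IH]; intros Hf.
  - exists (fun i => i). split; [apply finperm_id | intros; lia].
  - destruct IH as [g [Hg Hgf]]; [intros i j Hi Hj; apply Hf; lia|].
    pose proof Hg as [[h [_ Hgh]] _].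
    set (u := h (f k)).
    exists (fun i => g (swap k u i)). split; [now apply finperm_comp_swap|].
    intros i Hi. unfold swap.
    destruct (Nat.eqb_spec i k) as [->|Hik]; [apply Hgh|].
    destruct (Nat.eqb_spec i u) as [Hiu|Hiu].
    + exfalso. apply Hik, Hf; try lia.
      rewrite <- (Hgf i), Hiu by lia. apply Hgh.
    + apply Hgf; lia.
Qed.

Lemma prefix_image_bounded k (f : nat -> nat) :
  exists M, forall i, (i < k)%nat -> (f i < M)%nat.
Proof.
  induction k as [|k [M HM]].
  - exists 0%nat; intros; lia.
  - exists (Nat.max M (S (f k))). intros i Hi.
    destruct (Nat.eq_dec i k) as [->|]; [lia|].
    specialize (HM i ltac:(lia)); lia.
Qed.

Fixpoint min_upto (F : nat -> R) (k : nat) : R :=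
  match k with O => F O | S k' => Rmin (min_upto F k') (F k) end.

Lemma min_upto_le F k j : (j <= k)%nat -> min_upto F k <= F j.
Proof.
  induction k as [|k IH]; intros Hj; simpl.
  - replace j with 0%nat by lia. lra.
  - destruct (Nat.eq_dec j (S k)) as [->|]; [apply Rmin_r|].
    eapply Rle_trans; [apply Rmin_l | apply IH; lia].
Qed.

Lemma min_upto_attained F k : exists j, (j <= k)%nat /\ min_upto F k = F j.
Proof.
  induction k as [|k [j [Hj E]]]; [exists 0%nat; auto|].
  simpl. unfold Rmin. destruct (Rle_dec (min_upto F k) (F (S k))).
  - exists j; auto.
  - exists (S k); auto.
Qed.

Definition approx_embeds (r x : mat) (k : nat) (f : nat -> nat) (e : R) : Prop :=
  forall i j, (i < k)%nat -> (j < k)%nat -> Rabs (r (f i) (f j) - x i j) < e.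

Lemma approx_embeds_extend r x k f e :
  injective_below k f -> approx_embeds r x k f e ->
  exists g, finperm g /\ (forall i, (i < k)%nat -> g i = f i) /\ approx_embeds r x k g e.
Proof.
  intros Hinj Hf. destruct (finperm_extend k f Hinj) as [g [Hg Hgf]].
  exists g. split; [exact Hg | split; [exact Hgf|]].
  intros i j Hi Hj. rewrite !Hgf by assumption. apply Hf; assumption.
Qed.

Section Extension.
Variables r x : mat.
Hypothesis hr : is_dist r.
Hypothesis hx : is_dist x.

(* The largest r-1-Lipschitz function bounded by x_jk + c at each f j, j < k. *)
Definition extension_profile (k : nat) (f : nat -> nat) (c : R) (y : nat) : R :=
  min_upto (fun j => x j k + c + r (f j) y) (pred k).

Lemma extension_profile_le k f c y j :
  (j < k)%nat -> extension_profile k f c y <= x j k + c + r (f j) y.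
Proof. intros Hj. apply (min_upto_le (fun j => x j k + c + r (f j) y)). lia. Qed.

Lemma extension_profile_attained k f c y : (0 < k)%nat ->
  exists j, (j < k)%nat /\ extension_profile k f c y = x j k + c + r (f j) y.
Proof.
  intros Hk.
  destruct (min_upto_attained (fun j => x j k + c + r (f j) y) (pred k)) as [j [Hj E]].
  exists j. split; [lia | exact E].
Qed.

Lemma extension_profile_in_A k f c e M : (0 < k)%nat ->
  approx_embeds r x k f e -> e <= 2 * c -> A_set M r (extension_profile k f c).
Proof.
  intros Hk Hf Hec y z _ _.
  destruct hr as (_ & _ & rsym & rtri).
  destruct hx as (_ & _ & xsym & xtri).
  destruct (extension_profile_attained k f c y Hk) as [j1 [Hj1 Ey]].
  destruct (extension_profile_attained k f c z Hk) as [j2 [Hj2 Ez]].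
  pose proof (extension_profile_le k f c y j2 Hj2).
  pose proof (extension_profile_le k f c z j1 Hj1).
  pose proof (rtri (f j2) y z). pose proof (rtri (f j1) z y).
  pose proof (rtri y z (f j1)). pose proof (rtri (f j1) z (f j2)).
  pose proof (rsym y z). pose proof (rsym y (f j1)).
  pose proof (Rabs_def2 _ _ (Hf j1 j2 Hj1 Hj2)).
  pose proof (xtri j1 j2 k). pose proof (xsym k j2).
  split; [apply Rabs_le|]; lra.
Qed.

Lemma extension_profile_near k f c e i : (0 < k)%nat ->
  approx_embeds r x k f e -> (i < k)%nat ->
  x i k + c - e < extension_profile k f c (f i) <= x i k + c.
Proof.
  intros Hk Hf Hi.
  destruct hr as (r0 & _ & _ & _).
  destruct hx as (_ & _ & xsym & xtri).
  pose proof (extension_profile_le k f c (f i) i Hi) as Hle. rewrite r0 in Hle.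
  destruct (extension_profile_attained k f c (f i) Hk) as [j [Hj E]].
  pose proof (Rabs_def2 _ _ (Hf j i Hj Hi)).
  pose proof (xtri i k j). pose proof (xsym i j).
  lra.
Qed.

Lemma universal_next_point k f c e : universal r -> (0 < k)%nat -> 0 < e ->
  e <= 2 * c -> approx_embeds r x k f e ->
  exists m, forall i, (i < k)%nat -> x i k + c - 2 * e < r (f i) m < x i k + c + e.
Proof.
  intros [_ hu] Hk He Hec Hf.
  destruct (prefix_image_bounded k f) as [M HM].
  destruct (hu M _ (extension_profile_in_A k f c e M Hk Hf Hec) e He) as [m Hm].
  exists m. intros i Hi.
  pose proof (Rabs_def2 _ _ (Hm (f i) (HM i Hi))).
  pose proof (extension_profile_near k f c e i Hk Hf Hi).
  lra.
Qed.

Lemma approx_embeds_step k f d : universal r -> 0 < d ->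
  injective_below k f -> approx_embeds r x k f (d / 8) ->
  exists f', (forall i, (i < k)%nat -> f' i = f i) /\
             injective_below (S k) f' /\ approx_embeds r x (S k) f' d.
Proof.
  intros hu Hd Hinj Hf.
  destruct hr as (r0 & _ & rsym & _).
  destruct hx as (x0 & xpos & xsym & _).
  destruct (Nat.eq_dec k 0) as [->|Hk].
  { exists (fun _ => 0%nat). split; [|split].
    - intros i Hi; lia.
    - intros i j Hi Hj _; lia.
    - intros i j Hi Hj. assert (i = 0%nat) as -> by lia. assert (j = 0%nat) as -> by lia.
      rewrite r0, x0, Rminus_0_r, Rabs_R0. exact Hd. }
  destruct (universal_next_point k f (d / 2) (d / 8) hu) as [m Hm];
    [lia | lra | lra | exact Hf |].
  exists (fun i => if Nat.eqb i k then m else f i). split; [|split].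
  - intros i Hi. destruct (Nat.eqb_spec i k); [lia | reflexivity].
  - intros i j Hi Hj.
    destruct (Nat.eqb_spec i k) as [->|]; destruct (Nat.eqb_spec j k) as [->|];
      intros E; try reflexivity.
    + pose proof (Hm j ltac:(lia)). pose proof (xpos j k).
      rewrite E, r0 in *. lra.
    + pose proof (Hm i ltac:(lia)). pose proof (xpos i k).
      rewrite <- E, r0 in *. lra.
    + apply Hinj; lia.
  - intros i j Hi Hj.
    destruct (Nat.eqb_spec i k) as [->|]; destruct (Nat.eqb_spec j k) as [->|].
    + rewrite r0, x0, Rminus_0_r, Rabs_R0. exact Hd.
    + pose proof (Hm j ltac:(lia)). rewrite rsym, xsym. apply Rabs_def1; lra.
    + pose proof (Hm i ltac:(lia)). apply Rabs_def1; lra.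
    + pose proof (Rabs_def2 _ _ (Hf i j ltac:(lia) ltac:(lia))). apply Rabs_def1; lra.
Qed.

Lemma universal_fiber_embeddings n : universal r ->
  (forall i j, (i < n)%nat -> (j < n)%nat -> x i j = r i j) ->
  forall k d, (n <= k)%nat -> 0 < d ->
  exists f, (forall i, (i < n)%nat -> f i = i) /\
            injective_below k f /\ approx_embeds r x k f d.
Proof.
  intros hu Hxr k. induction k as [|k IH]; intros d Hnk Hd.
  - exists (fun i => i). split; [|split].
    + intros i Hi; lia.
    + intros i j Hi; lia.
    + intros i j Hi; lia.
  - destruct (Nat.eq_dec n (S k)) as [<-|Hn].
    + exists (fun i => i). split; [|split]; [auto | intros i j _ _ E; exact E |].
      intros i j Hi Hj. rewrite Hxr, Rminus_diag, Rabs_R0 by assumption. exact Hd.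
    + destruct (IH (d / 8)) as [f [Hfix [Hinj Hf]]]; [lia | lra |].
      destruct (approx_embeds_step k f d hu Hd Hinj Hf) as [f' [Hff' [Hinj' Hf']]].
      exists f'. split; [|split; assumption].
      intros i Hi. rewrite Hff' by lia. auto.
Qed.

End Extension.

Lemma universal_orbit_dense r n : is_dist r -> universal r ->
  weakly_dense_in (orbit_n n r) (R_n_fiber n r).
Proof.
  intros hr hu x [hx Hxr] N eps Heps.
  destruct (universal_fiber_embeddings r x hr hx n hu Hxr (Nat.max N n) eps)
    as [f [Hfix [Hinj Hf]]]; [lia | exact Heps |].
  destruct (approx_embeds_extend r x _ f eps Hinj Hf) as [g [Hg [Hgf Hgx]]].
  exists (act g r). split.
  - exists g. split; [exact Hg | split; [|reflexivity]].
    intros i Hi. rewrite Hgf by lia. auto.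
  - intros i j Hi Hj. apply Hgx; lia.
Qed.

(* All indices [>= n] stand for a single new point, at distance [a i] from [i]. *)
Definition one_point_extension (n : nat) (r : mat) (a : nat -> R) : mat :=
  fun i j => if Nat.ltb i n then (if Nat.ltb j n then r i j else a i)
             else (if Nat.ltb j n then a j else 0).

Lemma one_point_extension_fiber n r a : is_dist r -> A_set n r a ->
  R_n_fiber n r (one_point_extension n r a).
Proof.
  intros (r0 & rpos & rsym & rtri) Ha.
  assert (Hlip : forall i j, (i < n)%nat -> (j < n)%nat -> a i - a j <= r i j).
  { intros i j Hi Hj. eapply Rle_trans; [apply Rle_abs | apply (Ha i j Hi Hj)]. }
  assert (Hsum : forall i j, (i < n)%nat -> (j < n)%nat -> r i j <= a i + a j).
  { intros i j Hi Hj. apply (Ha i j Hi Hj). }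
  assert (Hpos : forall i, (i < n)%nat -> 0 <= a i).
  { intros i Hi. pose proof (Hsum i i Hi Hi). rewrite r0 in *. lra. }
  unfold one_point_extension.
  split; [split; [|split; [|split]]|].
  - intros i. destruct (Nat.ltb_spec i n); auto.
  - intros i j. destruct (Nat.ltb_spec i n); destruct (Nat.ltb_spec j n); auto; lra.
  - intros i j. destruct (Nat.ltb_spec i n); destruct (Nat.ltb_spec j n); auto.
  - intros i j k.
    destruct (Nat.ltb_spec i n); destruct (Nat.ltb_spec j n); destruct (Nat.ltb_spec k n);
      try pose proof (Hpos i ltac:(lia));
      try pose proof (Hpos j ltac:(lia));
      try pose proof (Hpos k ltac:(lia));
      try pose proof (Hlip i k ltac:(lia) ltac:(lia));
      try pose proof (Hlip j k ltac:(lia) ltac:(lia));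
      try pose proof (Hsum i j ltac:(lia) ltac:(lia));
      pose proof (rtri i j k); pose proof (rsym i k); pose proof (rsym j k); lra.
  - intros i j Hi Hj.
    destruct (Nat.ltb_spec i n); destruct (Nat.ltb_spec j n); auto; lia.
Qed.

Lemma universal_of_orbit_dense r : is_dist r -> proper r ->
  (forall n, weakly_dense_in (orbit_n n r) (R_n_fiber n r)) -> universal r.
Proof.
  intros hr hp HD. split; [exact hp|].
  intros n a Ha eps Heps.
  destruct (HD n _ (one_point_extension_fiber n r a hr Ha) (S n) eps Heps)
    as [d [[g [_ [Hfix ->]]] Hd]].
  exists (g n). intros i Hi.
  specialize (Hd i n ltac:(lia) ltac:(lia)).
  unfold act, one_point_extension in Hd. rewrite (Hfix i Hi) in Hd.
  destruct (Nat.ltb_spec i n); [|lia].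
  destruct (Nat.ltb_spec n n); [lia | exact Hd].
Qed.

Definition offdiag_shift (x : mat) (c : R) : mat :=
  fun i j => if Nat.eq_dec i j then 0 else x i j + c.

Lemma offdiag_shift_is_dist x c : is_dist x -> 0 <= c -> is_dist (offdiag_shift x c).
Proof.
  intros (x0 & xpos & xsym & xtri) Hc. unfold offdiag_shift.
  split; [|split; [|split]].
  - intros i. destruct (Nat.eq_dec i i); [reflexivity | congruence].
  - intros i j. destruct (Nat.eq_dec i j); [lra|]. pose proof (xpos i j). lra.
  - intros i j. destruct (Nat.eq_dec i j), (Nat.eq_dec j i); try lia; auto.
    rewrite xsym. reflexivity.
  - intros i j k.
    pose proof (xpos i j); pose proof (xpos i k); pose proof (xpos k j);
      pose proof (xtri i j k).
    destruct (Nat.eq_dec i j), (Nat.eq_dec i k), (Nat.eq_dec k j); subst; try lia; lra.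
Qed.

Lemma is_dist_n_of_is_dist n q : is_dist q -> is_dist_n n q.
Proof. intros (q0 & qpos & qsym & qtri). repeat split; auto. Qed.

Lemma approx_offdiag_shift r x k f c : is_dist r -> is_dist x ->
  approx_embeds r (offdiag_shift x c) k f c ->
  injective_below k f /\ approx_embeds r x k f (2 * c).
Proof.
  intros (r0 & _ & _ & _) (x0 & xpos & _ & _) Hf.
  unfold approx_embeds, offdiag_shift in Hf. split.
  - intros i j Hi Hj E.
    pose proof (Rabs_def2 _ _ (Hf i j Hi Hj)) as Hij. pose proof (xpos i j).
    destruct (Nat.eq_dec i j); [assumption|].
    rewrite E, r0 in Hij. lra.
  - intros i j Hi Hj.
    pose proof (Rabs_def2 _ _ (Hf i j Hi Hj)) as Hij.
    destruct (Nat.eq_dec i j) as [->|]; apply Rabs_def1; rewrite ?r0, ?x0 in *; lra.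
Qed.

Lemma weakly_universal_orbit_dense r : is_dist r -> weakly_universal r ->
  weakly_dense_in (orbit r) is_dist.
Proof.
  intros hr [_ hw] x hx N eps Heps.
  set (c := eps / 2).
  assert (Hc : 0 < c) by (unfold c; lra).
  destruct (hw N _ (is_dist_n_of_is_dist N _ (offdiag_shift_is_dist x c hx (Rlt_le _ _ Hc))) c Hc)
    as [f Hf].
  destruct (approx_offdiag_shift r x N f c hr hx Hf) as [Hinj Hfx].
  replace (2 * c) with eps in Hfx by (unfold c; lra).
  destruct (approx_embeds_extend r x N f eps Hinj Hfx) as [g [Hg [_ Hgx]]].
  exists (act g r). split; [exists g; split; [exact Hg | reflexivity] | exact Hgx].
Qed.

Definition clamp (n : nat) (q : mat) : mat :=
  fun i j => q (Nat.min i n) (Nat.min j n).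

Lemma clamp_is_dist n q : is_dist_n (S n) q -> is_dist (clamp n q).
Proof.
  intros (q0 & qpos & qsym & qtri). unfold clamp.
  split; [|split; [|split]]; intros;
    [apply q0 | apply qpos | apply qsym | apply qtri]; lia.
Qed.

Lemma weakly_universal_of_orbit_dense r : proper r ->
  weakly_dense_in (orbit r) is_dist -> weakly_universal r.
Proof.
  intros hp HD. split; [exact hp|].
  intros [|n] q Hq eps Heps.
  - exists (fun _ => 0%nat). intros; lia.
  - destruct (HD _ (clamp_is_dist n q Hq) (S n) eps Heps) as [d [[g [_ ->]] Hd]].
    exists g. intros k s Hk Hs. specialize (Hd k s Hk Hs).
    unfold act, clamp in Hd. rewrite !Nat.min_l in Hd by lia. exact Hd.
Qed.

Theorem mainTheorem11 (r : mat) (hr : is_dist r) (hp : proper r) :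
  (universal r <-> forall n : nat, weakly_dense_in (orbit_n n r) (R_n_fiber n r)) /\
  (weakly_universal r <-> weakly_dense_in (orbit r) is_dist).
Proof.
  split; split.
  - intros hu n. exact (universal_orbit_dense r n hr hu).
  - exact (universal_of_orbit_dense r hr hp).
  - exact (weakly_universal_orbit_dense r hr).
  - exact (weakly_universal_of_orbit_dense r hp).
Qed.
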